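(* For all $\alpha\in\mathbb R$ and $\rho>1$, $$\lim_{n\to\infty}\max_{Q\in\mathcal P_n(\rho)}D_{\mathrm A}^{(\alpha)}(U_n\|Q)=\Delta(\alpha,\rho),$$ where $\Delta(\alpha,\rho)=\frac1{\alpha(\alpha-1)}\Big[\frac{((\rho^\alpha-1)/\alpha)^{\alpha}((\rho-\rho^\alpha)/(1-\alpha))^{1-\alpha}}{\rho-1}-1\Big]$ for $\alpha\notin\{0,1\}$ and $\Delta(1,\rho)=\Delta(0,\rho)=\frac{\rho\ln\rho}{\rho-1}-\ln\frac{e\rho\ln\rho}{\rho-1}$.
   Context: $\mathcal P_n(\rho)$: probability mass functions on $\{1,\dots,n\}$ with all masses positive and max/min mass ratio at most $\rho$; $U_n$ uniform on $\{1,\dots,n\}$. $D_{\mathrm A}^{(\alpha)}(P\|Q)=\sum_xQ(x)u_\alpha(P(x)/Q(x))$ with $u_\alpha(t)=\frac{t^\alpha-\alpha(t-1)-1}{\alpha(\alpha-1)}$ ($\alpha\notin\{0,1\}$), $u_1(t)=t\ln t+1-t$, $u_0(t)=-\ln t$. *)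

From Stdlib Require Import Reals.
Open Scope R_scope.

Fixpoint fsum (f : nat -> R) (n : nat) : R :=
  match n with
  | O => 0
  | S m => fsum f m + f m
  end.

(* A pmf on {1..n} is represented as Q : nat -> R on indices 0..n-1.
   Membership in P_n(rho): all masses positive, total mass 1,
   max/min ratio at most rho (i.e. Q i <= rho * Q j for all i, j). *)
Definition in_Pn (n : nat) (rho : R) (Q : nat -> R) : Prop :=
  (forall i, (i < n)%nat -> 0 < Q i) /\
  fsum Q n = 1 /\
  (forall i j, (i < n)%nat -> (j < n)%nat -> Q i <= rho * Q j).

Definition u (alpha t : R) : R :=
  if Req_EM_T alpha 0 then - ln t
  else if Req_EM_T alpha 1 then t * ln t + 1 - t
  else (Rpower t alpha - alpha * (t - 1) - 1) / (alpha * (alpha - 1)).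

Definition DA (alpha : R) (n : nat) (P Q : nat -> R) : R :=
  fsum (fun x => Q x * u alpha (P x / Q x)) n.

Definition Unif (n : nat) : nat -> R := fun _ => / INR n.

Definition DeltaA (alpha rho : R) : R :=
  if Req_EM_T alpha 0 then
    rho * ln rho / (rho - 1) - ln (exp 1 * rho * ln rho / (rho - 1))
  else if Req_EM_T alpha 1 then
    rho * ln rho / (rho - 1) - ln (exp 1 * rho * ln rho / (rho - 1))
  else
    / (alpha * (alpha - 1)) *
      (Rpower ((Rpower rho alpha - 1) / alpha) alpha
       * Rpower ((rho - Rpower rho alpha) / (1 - alpha)) (1 - alpha)
       / (rho - 1) - 1).

Definition is_max_div (alpha rho : R) (n : nat) (m : R) : Prop :=
  (exists Q, in_Pn n rho Q /\ DA alpha n (Unif n) Q = m) /\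
  (forall Q, in_Pn n rho Q -> DA alpha n (Unif n) Q <= m).

(* The summand q |-> q u_alpha(c/q) of D_A^(alpha)(U_n || Q) is convex in q, being a perspective
   of the convex u_alpha.  Pushing two masses of Q apart, towards its minimum m or towards
   rho m, therefore increases the divergence; this leaves k masses rho m, j masses m and one
   intermediate mass, which is removed by moving along a segment between two adjacent vertices.
   So the maximum over P_n(rho) is attained at a vertex (k masses rho l and n - k masses l),
   where the divergence equals Gamma(1 + (rho - 1) k / n) for an explicit function Gamma
   continuous on (0, oo).  Bernoulli's inequality (ln y <= y - 1 when alpha is 0 or 1) shows
   that Gamma attains its maximum Delta(alpha, rho) at a point of [1, rho], and the grid
   1 + (rho - 1) k / n becomes dense in [1, rho]. *)

From Stdlib Require Import Reals Lra Lia.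
From Coquelicot Require Import Coquelicot.
Open Scope R_scope.

Lemma exp_tangent_le (t y : R) : exp t * (1 + (y - t)) <= exp y.
Proof.
  replace y with (t + (y - t)) at 2 by ring.
  rewrite exp_plus; apply Rmult_le_compat_l; [left; apply exp_pos | apply exp_ineq1_le].
Qed.

Lemma exp_convex (l m y z : R) : 0 <= l -> 0 <= m -> 0 < l + m ->
  (l + m) * exp ((l * y + m * z) / (l + m)) <= l * exp y + m * exp z.
Proof.
  intros hl hm hlm; set (t := (l * y + m * z) / (l + m)).
  pose proof (Rmult_le_compat_l l _ _ hl (exp_tangent_le t y)).
  pose proof (Rmult_le_compat_l m _ _ hm (exp_tangent_le t z)).
  assert (hw : l * (1 + (y - t)) + m * (1 + (z - t)) = l + m) by (unfold t; field; lra).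
  assert ((l + m) * exp t = l * (exp t * (1 + (y - t))) + m * (exp t * (1 + (z - t))))
    by (rewrite <- hw; ring).
  lra.
Qed.

(* Each case is [exp_convex] for the weights making one side collapse to [x], [x^a] or [1]. *)
Lemma Rpower_bernoulli (x a : R) : 0 < x ->
  0 <= a * (a - 1) * (Rpower x a - 1 - a * (x - 1)).
Proof.
  intros hx; unfold Rpower; set (l := ln x).
  assert (hxl : x = exp l) by (unfold l; rewrite exp_ln; auto).
  rewrite hxl.
  destruct (Rlt_le_dec 1 a) as [ha1|ha1]; [|destruct (Rlt_le_dec a 0) as [ha0|ha0]].
  - pose proof (exp_convex 1 (a - 1) (a * l) 0 ltac:(lra) ltac:(lra) ltac:(lra)) as C.
    replace ((1 * (a * l) + (a - 1) * 0) / (1 + (a - 1))) with l in C by (field; lra).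
    rewrite exp_0 in C; apply Rmult_le_pos; nra.
  - pose proof (exp_convex 1 (- a) (a * l) l ltac:(lra) ltac:(lra) ltac:(lra)) as C.
    replace ((1 * (a * l) + - a * l) / (1 + - a)) with 0 in C by (field; lra).
    rewrite exp_0 in C; apply Rmult_le_pos; nra.
  - pose proof (exp_convex a (1 - a) l 0 ha0 ltac:(lra) ltac:(lra)) as C.
    replace ((a * l + (1 - a) * 0) / (a + (1 - a))) with (a * l) in C by (field; lra).
    rewrite exp_0 in C.
    replace (a * (a - 1) * (exp (a * l) - 1 - a * (exp l - 1)))
      with (a * (1 - a) * (a * exp l + (1 - a) - exp (a * l))) by ring.
    apply Rmult_le_pos; nra.
Qed.

Lemma ln_le_sub_1 (y : R) : 0 < y -> ln y <= y - 1.
Proof. intros hy; pose proof (exp_ineq1_le (ln y)) as h; rewrite exp_ln in h; lra. Qed.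

Lemma Rdiv_nonneg_of_mul_nonneg (c b : R) : c <> 0 -> 0 <= c * b -> 0 <= b / c.
Proof.
  intros hc hcb; replace (b / c) with (c * b * / (c * c)) by (field; auto).
  apply Rmult_le_pos; [auto | left; apply Rinv_0_lt_compat; nra].
Qed.

Lemma Rpower_sub_1 (t a : R) : 0 < t -> Rpower t (a - 1) = Rpower t a / t.
Proof. intros ht; unfold Rminus; rewrite Rpower_plus, Rpower_Ropp, Rpower_1; auto. Qed.

Definition upow (a t : R) : R := (Rpower t a - a * (t - 1) - 1) / (a * (a - 1)).

Lemma u_upow (a t : R) : a <> 0 -> a <> 1 -> u a t = upow a t.
Proof.
  intros h0 h1; unfold u; destruct (Req_EM_T a 0); [lra|]; destruct (Req_EM_T a 1); [lra|].
  reflexivity.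
Qed.

(* For [a = 0] or [a = 1] this holds because [x / 0 = 0]. *)
Lemma upow_nonneg (a x : R) : 0 < x -> 0 <= upow a x.
Proof.
  intros hx; unfold upow.
  destruct (Req_dec (a * (a - 1)) 0) as [e|ne].
  - rewrite e; unfold Rdiv; rewrite Rinv_0, Rmult_0_r; lra.
  - apply Rdiv_nonneg_of_mul_nonneg; auto.
    replace (Rpower x a - a * (x - 1) - 1) with (Rpower x a - 1 - a * (x - 1)) by ring.
    apply Rpower_bernoulli; auto.
Qed.

Definition du (a t : R) : R :=
  if Req_EM_T a 0 then - / t
  else if Req_EM_T a 1 then ln t
  else (Rpower t (a - 1) - 1) / (a - 1).

Lemma u_tangent_le (a s t : R) : 0 < s -> 0 < t -> u a t + du a t * (s - t) <= u a s.
Proof.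
  intros hs ht; pose proof (Rdiv_lt_0_compat _ _ hs ht) as hst.
  pose proof (Rdiv_lt_0_compat _ _ ht hs) as hts.
  unfold du; destruct (Req_EM_T a 0) as [e0|n0]; [|destruct (Req_EM_T a 1) as [e1|n1]].
  - subst; unfold u; destruct (Req_EM_T 0 0); [|lra].
    pose proof (ln_le_sub_1 _ hst) as hln; rewrite ln_div in hln by auto.
    replace (s / t - 1) with (/ t * (s - t)) in hln by (field; lra); lra.
  - subst; unfold u; destruct (Req_EM_T 1 0); [lra|]; destruct (Req_EM_T 1 1); [|lra].
    pose proof (Rmult_le_compat_l s _ _ (Rlt_le _ _ hs) (ln_le_sub_1 _ hts)) as hln.
    rewrite ln_div in hln by auto.
    replace (s * (t / s - 1)) with (t - s) in hln by (field; lra); nra.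
  - rewrite !u_upow by auto.
    assert (e : upow a s - (upow a t + (Rpower t (a - 1) - 1) / (a - 1) * (s - t))
              = Rpower t a * upow a (s / t)).
    { unfold upow; rewrite Rpower_sub_1 by auto.
      replace (Rpower s a) with (Rpower t a * Rpower (s / t) a)
        by (rewrite Rpower_mult_distr by auto; f_equal; field; lra).
      field; repeat split; lra. }
    pose proof (upow_nonneg a _ hst).
    assert (0 < Rpower t a) by apply exp_pos.
    nra.
Qed.

Definition has_tangents (f D : R -> R) : Prop :=
  forall p z, 0 < p -> 0 < z -> f z + D z * (p - z) <= f p.

Section Tangents.

Variables f D : R -> R.
Hypothesis f_tangents : has_tangents f D.

Lemma tangents_chord_affine (al be a1 a2 x : R) :
  a2 <= x <= a1 -> 0 < al * a2 + be -> 0 < al * x + be -> 0 < al * a1 + be ->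
  (a1 - a2) * f (al * x + be)
    <= (a1 - x) * f (al * a2 + be) + (x - a2) * f (al * a1 + be).
Proof.
  intros [h2 h1] p2 px p1.
  pose proof (Rmult_le_compat_l (a1 - x) _ _ ltac:(lra) (f_tangents _ _ p2 px)) as T2.
  pose proof (Rmult_le_compat_l (x - a2) _ _ ltac:(lra) (f_tangents _ _ p1 px)) as T1.
  set (z := al * x + be) in *; set (d := D z) in *.
  assert ((a1 - x) * (f z + d * (al * a2 + be - z)) + (x - a2) * (f z + d * (al * a1 + be - z))
          = (a1 - a2) * f z) by (unfold z; ring).
  lra.
Qed.

Lemma tangents_spread_pair (lo hi r y : R) :
  0 < lo -> lo <= r <= hi -> lo <= y <= hi -> r + y = lo + hi -> f r + f y <= f lo + f hi.
Proof.
  intros hlo hr hy hs.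
  destruct (Req_dec lo hi) as [e|ne].
  - subst hi; replace r with lo by lra; replace y with lo by lra; lra.
  - pose proof (tangents_chord_affine 1 0 hi lo r hr) as Cr.
    pose proof (tangents_chord_affine 1 0 hi lo y hy) as Cy.
    rewrite !Rmult_1_l, !Rplus_0_r in Cr, Cy.
    specialize (Cr ltac:(lra) ltac:(lra) ltac:(lra)).
    specialize (Cy ltac:(lra) ltac:(lra) ltac:(lra)).
    apply Rmult_le_reg_l with (hi - lo); [lra|].
    replace y with (lo + hi - r) in * by lra.
    lra.
Qed.

Lemma tangents_spread_fsum (lo hi : R) : 0 < lo -> lo <= hi ->
  forall m (x : nat -> R), (forall i, (i <= m)%nat -> lo <= x i <= hi) ->
  exists k j r, (k + j = m)%nat /\ lo <= r <= hi /\
    fsum x (S m) = INR k * hi + INR j * lo + r /\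
    fsum (fun i => f (x i)) (S m) <= INR k * f hi + INR j * f lo + f r.
Proof.
  intros hlo hlh m; induction m as [|m IH]; intros x hx.
  - exists 0%nat, 0%nat, (x 0%nat); simpl.
    split; [lia|]; split; [apply hx; lia | lra].
  - destruct (IH x) as (k & j & r & hkj & hr & hs & hf); [intros i hi0; apply hx; lia|].
    assert (hy : lo <= x (S m) <= hi) by (apply hx; lia).
    change (fsum x (S (S m))) with (fsum x (S m) + x (S m)).
    change (fsum (fun i => f (x i)) (S (S m)))
      with (fsum (fun i => f (x i)) (S m) + f (x (S m))).
    set (y := x (S m)) in *.
    destruct (Rle_lt_dec (r + y) (lo + hi)).
    + exists k, (S j), (r + y - lo); rewrite S_INR.
      pose proof (tangents_spread_pair lo (r + y - lo) r y hlo
                    ltac:(lra) ltac:(lra) ltac:(lra)).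
      repeat split; try lia; try lra.
    + exists (S k), j, (r + y - hi); rewrite S_INR.
      pose proof (tangents_spread_pair (r + y - hi) hi r y
                    ltac:(lra) ltac:(lra) ltac:(lra) ltac:(lra)).
      repeat split; try lia; try lra.
Qed.

(* With the total mass fixed at 1, the masses [rho * lo], [lo] and [r] are affine in [lo]; at
   [lo = / (K * rho + J + 1)] the remainder [r] equals [lo], at [lo = / ((K + 1) * rho + J)]
   it equals [rho * lo], and convexity along this segment bounds the sum by a chord. *)
Lemma tangents_remainder_le (rho K J lo r : R) :
  1 < rho -> 0 <= K -> 0 <= J -> 0 < lo -> lo <= r <= rho * lo ->
  K * rho * lo + J * lo + r = 1 ->
  K * f (rho * lo) + J * f lo + f r <=
  Rmax (K * f (rho * / (K * rho + J + 1)) + (J + 1) * f (/ (K * rho + J + 1)))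
       ((K + 1) * f (rho * / ((K + 1) * rho + J)) + J * f (/ ((K + 1) * rho + J))).
Proof.
  intros hrho hK hJ hlo hr hsum.
  assert (p1 : 0 < K * rho + J + 1) by nra.
  assert (p2 : 0 < (K + 1) * rho + J) by nra.
  set (a1 := / (K * rho + J + 1)); set (a2 := / ((K + 1) * rho + J)).
  assert (ha1 : 0 < a1) by (apply Rinv_0_lt_compat; auto).
  assert (ha2 : 0 < a2) by (apply Rinv_0_lt_compat; auto).
  assert (e1 : (K * rho + J + 1) * a1 = 1) by (unfold a1; field; lra).
  assert (e2 : ((K + 1) * rho + J) * a2 = 1) by (unfold a2; field; lra).
  assert (ha12 : a2 < a1) by (apply Rinv_lt_contravar; nra).
  assert (hlo1 : lo <= a1) by (apply Rmult_le_reg_l with (K * rho + J + 1); nra).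
  assert (hlo2 : a2 <= lo) by (apply Rmult_le_reg_l with ((K + 1) * rho + J); nra).
  set (be := - (K * rho + J)).
  assert (hr' : r = be * lo + 1) by (unfold be; lra).
  assert (q1 : be * a1 + 1 = a1) by (unfold be; lra).
  assert (q2 : be * a2 + 1 = rho * a2) by (unfold be; lra).
  pose proof (tangents_chord_affine rho 0 a1 a2 lo ltac:(lra)) as Crho.
  pose proof (tangents_chord_affine 1 0 a1 a2 lo ltac:(lra)) as C1.
  pose proof (tangents_chord_affine be 1 a1 a2 lo ltac:(lra)) as Cr.
  rewrite !Rplus_0_r in Crho, C1; rewrite !Rmult_1_l in C1.
  rewrite q1, q2, <- hr' in Cr.
  specialize (Crho ltac:(nra) ltac:(nra) ltac:(nra)).
  specialize (C1 ltac:(lra) ltac:(lra) ltac:(lra)).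
  specialize (Cr ltac:(nra) ltac:(lra) ltac:(lra)).
  set (V1 := K * f (rho * a1) + (J + 1) * f a1).
  set (V2 := (K + 1) * f (rho * a2) + J * f a2).
  assert (chord : (a1 - a2) * (K * f (rho * lo) + J * f lo + f r)
                  <= (a1 - lo) * V2 + (lo - a2) * V1).
  { apply Rmult_le_compat_l with (r := K) in Crho; auto.
    apply Rmult_le_compat_l with (r := J) in C1; auto.
    unfold V1, V2; lra. }
  pose proof (Rmult_le_compat_l (a1 - lo) _ _ ltac:(lra) (Rmax_r V1 V2)).
  pose proof (Rmult_le_compat_l (lo - a2) _ _ ltac:(lra) (Rmax_l V1 V2)).
  apply Rmult_le_reg_l with (a1 - a2); lra.
Qed.

End Tangents.

Definition dterm (a c q : R) : R := q * u a (c / q).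

Definition dterm_slope (a c z : R) : R := u a (c / z) - c / z * du a (c / z).

Lemma dterm_tangents (a c : R) : 0 < c -> has_tangents (dterm a c) (dterm_slope a c).
Proof.
  intros hc p z hp hz; unfold dterm, dterm_slope.
  pose proof (u_tangent_le a (c / p) (c / z)
                (Rdiv_lt_0_compat _ _ hc hp) (Rdiv_lt_0_compat _ _ hc hz)) as T.
  apply Rmult_le_compat_l with (r := p) in T; [|lra].
  set (t := c / z) in *.
  replace (p * (u a t + du a t * (c / p - t)))
    with (z * u a t + (u a t - t * du a t) * (p - z)) in T by (unfold t; field; lra).
  exact T.
Qed.

Lemma fsum_ext (f g : nat -> R) (n : nat) :
  (forall i, (i < n)%nat -> f i = g i) -> fsum f n = fsum g n.
Proof. induction n; intros h; simpl; auto; rewrite IHn, h; auto. Qed.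

Lemma fsum_ltb_min (A B : R) (k n : nat) :
  fsum (fun x => if Nat.ltb x k then A else B) n
  = INR (Nat.min k n) * A + (INR n - INR (Nat.min k n)) * B.
Proof.
  induction n; simpl fsum.
  - rewrite Nat.min_0_r; simpl; ring.
  - rewrite IHn; destruct (Nat.ltb_spec n k).
    + rewrite (Nat.min_r k n), (Nat.min_r k (S n)), S_INR by lia; ring.
    + rewrite (Nat.min_l k n), (Nat.min_l k (S n)), S_INR by lia; ring.
Qed.

Lemma fsum_ltb (A B : R) (k n : nat) : (k <= n)%nat ->
  fsum (fun x => if Nat.ltb x k then A else B) n = INR k * A + (INR n - INR k) * B.
Proof. intros h; rewrite fsum_ltb_min, Nat.min_l; auto. Qed.

Lemma nat_argmin (Q : nat -> R) (m : nat) :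
  exists j, (j <= m)%nat /\ forall i, (i <= m)%nat -> Q j <= Q i.
Proof.
  induction m as [|m [j [hj hmin]]].
  - exists 0%nat; split; auto; intros i hi; replace i with 0%nat by lia; lra.
  - destruct (Rle_lt_dec (Q j) (Q (S m))).
    + exists j; split; [lia|]; intros i hi.
      destruct (Nat.eq_dec i (S m)); [subst; auto | apply hmin; lia].
    + exists (S m); split; [lia|]; intros i hi.
      destruct (Nat.eq_dec i (S m)); [subst; lra|].
      specialize (hmin i ltac:(lia)); lra.
Qed.

Definition vertex_low (rho : R) (n k : nat) : R := / (INR k * rho + (INR n - INR k)).

Definition vertex (rho : R) (n k : nat) : nat -> R :=
  fun x => if Nat.ltb x k then rho * vertex_low rho n k else vertex_low rho n k.

Definition vertex_div (a rho : R) (n k : nat) : R :=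
  INR k * dterm a (/ INR n) (rho * vertex_low rho n k)
  + (INR n - INR k) * dterm a (/ INR n) (vertex_low rho n k).

Fixpoint max_vertex_div (a rho : R) (n K : nat) : R :=
  match K with
  | O => vertex_div a rho n 0
  | S K' => Rmax (max_vertex_div a rho n K') (vertex_div a rho n (S K'))
  end.

Lemma max_vertex_div_ge (a rho : R) (n K k : nat) :
  (k <= K)%nat -> vertex_div a rho n k <= max_vertex_div a rho n K.
Proof.
  induction K; intros h; simpl.
  - replace k with 0%nat by lia; lra.
  - destruct (Nat.eq_dec k (S K)); [subst; apply Rmax_r|].
    eapply Rle_trans; [apply IHK; lia | apply Rmax_l].
Qed.

Lemma max_vertex_div_attained (a rho : R) (n K : nat) :
  exists k, (k <= K)%nat /\ max_vertex_div a rho n K = vertex_div a rho n k.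
Proof.
  induction K as [|K [k [hk e]]]; simpl.
  - exists 0%nat; auto.
  - unfold Rmax; destruct (Rle_dec _ _); [exists (S K) | exists k]; auto.
Qed.

Lemma vertex_low_pos (rho : R) (n k : nat) :
  1 < rho -> (1 <= n)%nat -> (k <= n)%nat -> 0 < vertex_low rho n k.
Proof.
  intros hrho hn hk; apply le_INR in hn, hk; pose proof (pos_INR k); simpl in hn.
  apply Rinv_0_lt_compat; nra.
Qed.

Lemma vertex_in_Pn (rho : R) (n k : nat) : 1 < rho -> (1 <= n)%nat -> (k <= n)%nat ->
  in_Pn n rho (vertex rho n k).
Proof.
  intros hrho hn hk; pose proof (vertex_low_pos rho n k hrho hn hk) as hlow.
  unfold vertex; split; [|split].
  - intros i _; destruct (Nat.ltb i k); nra.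
  - rewrite fsum_ltb by auto; unfold vertex_low.
    apply le_INR in hn, hk; pose proof (pos_INR k); simpl in hn.
    field; nra.
  - assert (rho * vertex_low rho n k <= rho * (rho * vertex_low rho n k))
      by (apply Rmult_le_compat_l; nra).
    intros i j _ _; destruct (Nat.ltb i k), (Nat.ltb j k); nra.
Qed.

Lemma DA_vertex (a rho : R) (n k : nat) : (k <= n)%nat ->
  DA a n (Unif n) (vertex rho n k) = vertex_div a rho n k.
Proof.
  intros hk; unfold DA, Unif, vertex_div; rewrite <- fsum_ltb by auto.
  apply fsum_ext; intros i _; unfold vertex, dterm; destruct (Nat.ltb i k); reflexivity.
Qed.

Lemma DA_le_max_vertex_div (a rho : R) (m : nat) (Q : nat -> R) :
  1 < rho -> in_Pn (S m) rho Q -> DA a (S m) (Unif (S m)) Q <= max_vertex_div a rho (S m) (S m).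
Proof.
  intros hrho [hpos [hsum hratio]].
  set (n := S m) in *; set (c := / INR n).
  assert (hn : INR n = INR m + 1) by apply S_INR.
  assert (hc : 0 < c) by (apply Rinv_0_lt_compat; pose proof (pos_INR m); lra).
  change (DA a n (Unif n) Q) with (fsum (fun i => dterm a c (Q i)) n).
  destruct (nat_argmin Q m) as [j0 [hj0 hmin]].
  set (lo := Q j0); assert (hlo : 0 < lo) by (apply hpos; unfold n; lia).
  destruct (tangents_spread_fsum _ _ (dterm_tangents a c hc) lo (rho * lo) hlo ltac:(nra) m Q)
    as (k & j & r & hkj & hr & hs & hf).
  { intros i hi; split; [apply hmin | apply hratio; unfold n]; auto; lia. }
  fold n in hs, hf; rewrite hsum in hs.
  pose proof (tangents_remainder_le _ _ (dterm_tangents a c hc) rho (INR k) (INR j) lo r hrho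
                (pos_INR k) (pos_INR j) hlo hr ltac:(lra)) as hrem.
  assert (hkj' : INR n = INR k + INR j + 1) by (rewrite hn, <- hkj, plus_INR; ring).
  replace (INR k * rho + INR j + 1) with (INR k * rho + (INR n - INR k)) in hrem by lra.
  replace (INR j + 1) with (INR n - INR k) in hrem by lra.
  replace ((INR k + 1) * rho + INR j) with (INR (S k) * rho + (INR n - INR (S k))) in hrem
    by (rewrite S_INR; lra).
  replace (INR k + 1) with (INR (S k)) in hrem by apply S_INR.
  replace (INR j) with (INR n - INR (S k)) in hrem at 2 by (rewrite S_INR; lra).
  fold (vertex_low rho n k) (vertex_low rho n (S k)) in hrem; unfold c in hrem.
  fold (vertex_div a rho n k) (vertex_div a rho n (S k)) c in hrem.
  pose proof (Rmax_lub _ _ (max_vertex_div a rho n n)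
                (max_vertex_div_ge a rho n n k ltac:(lia))
                (max_vertex_div_ge a rho n n (S k) ltac:(lia))).
  lra.
Qed.

Lemma is_max_div_max_vertex_div (a rho : R) (n : nat) : 1 < rho -> (1 <= n)%nat ->
  is_max_div a rho n (max_vertex_div a rho n n).
Proof.
  intros hrho hn; split.
  - destruct (max_vertex_div_attained a rho n n) as [k [hk e]].
    exists (vertex rho n k); rewrite e; split; [apply vertex_in_Pn | apply DA_vertex]; auto.
  - intros Q hQ; destruct n as [|m]; [lia|]; apply DA_le_max_vertex_div; auto.
Qed.

Definition vertex_profile (a rho s : R) : R :=
  ((s - 1) * rho * u a (s / rho) + (rho - s) * u a s) / ((rho - 1) * s).

Lemma vertex_div_profile (a rho : R) (n k : nat) : 1 < rho -> (1 <= n)%nat -> (k <= n)%nat ->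
  vertex_div a rho n k = vertex_profile a rho (1 + (rho - 1) * INR k / INR n).
Proof.
  intros hrho hn hk; apply le_INR in hn, hk; pose proof (pos_INR k); simpl in hn.
  unfold vertex_div, dterm, vertex_low, vertex_profile.
  set (K := INR k) in *; set (N := INR n) in *.
  set (s := 1 + (rho - 1) * K / N).
  assert (hD : 0 < K * rho + (N - K)) by nra.
  replace (/ N / (rho * / (K * rho + (N - K)))) with (s / rho) by (unfold s; field; lra).
  replace (/ N / / (K * rho + (N - K))) with s by (unfold s; field; lra).
  unfold s; field; lra.
Qed.

Definition max_attained_in (g : R -> R) (lo hi m : R) : Prop :=
  (forall s, 0 < s -> g s <= m) /\ (exists s0, lo <= s0 <= hi /\ g s0 = m).

Lemma ln_gt_1_bounds (rho : R) : 1 < rho ->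
  0 < ln rho /\ ln rho <= rho - 1 /\ rho - 1 <= rho * ln rho.
Proof.
  intros hrho; split; [rewrite <- ln_1; apply ln_increasing; lra|].
  split; [apply ln_le_sub_1; lra|].
  pose proof (ln_le_sub_1 (/ rho) ltac:(apply Rinv_0_lt_compat; lra)) as h.
  rewrite ln_Rinv in h by lra.
  apply Rmult_le_compat_l with (r := rho) in h; [|lra].
  replace (rho * (/ rho - 1)) with (1 - rho) in h by (field; lra); lra.
Qed.

Lemma vertex_profile_max_0 (rho : R) : 1 < rho ->
  max_attained_in (vertex_profile 0 rho) 1 rho (DeltaA 0 rho).
Proof.
  intros hrho; destruct (ln_gt_1_bounds rho hrho) as (hL & hL1 & hL2).
  set (L := ln rho) in *; set (d := rho * L / (rho - 1)).
  assert (hd : 1 <= d <= rho).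
  { split; apply Rmult_le_reg_r with (rho - 1); unfold d;
      try replace (rho * L / (rho - 1) * (rho - 1)) with (rho * L) by (field; lra); nra. }
  assert (gap : forall s, 0 < s ->
            DeltaA 0 rho - vertex_profile 0 rho s = d / s - 1 - ln (d / s)).
  { intros s hs; unfold DeltaA, vertex_profile, u; destruct (Req_EM_T 0 0); [|lra].
    replace (exp 1 * rho * ln rho / (rho - 1)) with (exp 1 * d) by (unfold d, L; field; lra).
    rewrite ln_mult, ln_exp, !ln_div by (try apply exp_pos; lra).
    fold L; unfold d; field; lra. }
  split.
  - intros s hs; pose proof (gap s hs).
    pose proof (ln_le_sub_1 (d / s) ltac:(apply Rdiv_lt_0_compat; lra)); lra.
  - exists d; split; auto; pose proof (gap d ltac:(lra)) as hgap.
    replace (d / d) with 1 in hgap by (field; lra); rewrite ln_1 in hgap; lra.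
Qed.

Lemma vertex_profile_max_1 (rho : R) : 1 < rho ->
  max_attained_in (vertex_profile 1 rho) 1 rho (DeltaA 1 rho).
Proof.
  intros hrho; destruct (ln_gt_1_bounds rho hrho) as (hL & hL1 & hL2).
  set (L := ln rho) in *; set (e := L / (rho - 1)).
  assert (he : 0 < e) by (apply Rdiv_lt_0_compat; lra).
  assert (gap : forall s, 0 < s ->
            DeltaA 1 rho - vertex_profile 1 rho s = s * e - 1 - ln (s * e)).
  { intros s hs; unfold DeltaA, vertex_profile, u.
    destruct (Req_EM_T 1 0); [lra|]; destruct (Req_EM_T 1 1); [|lra].
    replace (exp 1 * rho * ln rho / (rho - 1)) with (exp 1 * rho * e) by (unfold e, L; field; lra).
    rewrite !ln_mult, ln_exp, ln_div by (try exact he; repeat apply Rmult_lt_0_compat; try apply exp_pos; lra).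
    fold L; unfold e; field; lra. }
  split.
  - intros s hs; pose proof (gap s hs).
    pose proof (ln_le_sub_1 (s * e) ltac:(apply Rmult_lt_0_compat; lra)); lra.
  - exists (/ e); split.
    + unfold e; rewrite Rinv_div; split; apply Rmult_le_reg_r with L; auto;
        replace ((rho - 1) / L * L) with (rho - 1) by (field; lra); lra.
    + pose proof (gap (/ e) ltac:(apply Rinv_0_lt_compat; lra)) as hgap.
      replace (/ e * e) with 1 in hgap by (field; lra); rewrite ln_1 in hgap; lra.
Qed.

Section GenericExponent.

Variables a rho : R.
Hypotheses (hrho : 1 < rho) (ha0 : a <> 0) (ha1 : a <> 1).

Let p := Rpower rho a.
Let a0 := (p - 1) / a.
Let b0 := (rho - p) / (1 - a).

Lemma a0_pos : 0 < a0.
Proof.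
  unfold a0, p; destruct (Rlt_le_dec 0 a).
  - pose proof (Rpower_lt rho 0 a hrho ltac:(lra)) as hp; rewrite Rpower_O in hp by lra.
    apply Rdiv_lt_0_compat; lra.
  - pose proof (Rpower_lt rho a 0 hrho ltac:(lra)) as hp; rewrite Rpower_O in hp by lra.
    replace ((Rpower rho a - 1) / a) with ((1 - Rpower rho a) / - a) by (field; lra).
    apply Rdiv_lt_0_compat; lra.
Qed.

Lemma b0_pos : 0 < b0.
Proof.
  unfold b0, p; destruct (Rlt_le_dec a 1).
  - pose proof (Rpower_lt rho a 1 hrho ltac:(lra)) as hp; rewrite Rpower_1 in hp by lra.
    apply Rdiv_lt_0_compat; lra.
  - pose proof (Rpower_lt rho 1 a hrho ltac:(lra)) as hp; rewrite Rpower_1 in hp by lra.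
    replace ((rho - Rpower rho a) / (1 - a)) with ((Rpower rho a - rho) / (a - 1))
      by (field; lra).
    apply Rdiv_lt_0_compat; lra.
Qed.

Lemma b0_sub_a0 : b0 - a0 = upow a rho.
Proof. unfold a0, b0, p, upow; field; lra. Qed.

Lemma rho_a0_sub_b0 : rho * a0 - b0 = p * upow (1 - a) rho.
Proof.
  assert (0 < p) by apply exp_pos.
  unfold a0, b0, upow.
  replace (Rpower rho (1 - a)) with (rho / p)
    by (unfold p, Rminus; rewrite Rpower_plus, Rpower_Ropp, Rpower_1 by lra; reflexivity).
  field; repeat split; lra.
Qed.

Lemma DeltaA_sub_vertex_profile (s : R) : 0 < s ->
  DeltaA a rho - vertex_profile a rho s
  = b0 * Rpower (s / rho) a * upow a (a0 / (b0 * (s / rho))) / (rho - 1).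
Proof.
  intros hs; pose proof a0_pos as ha; pose proof b0_pos as hb.
  set (w := s / rho); set (q := Rpower w a).
  assert (hw : 0 < w) by (apply Rdiv_lt_0_compat; lra).
  assert (hs' : s = rho * w) by (unfold w; field; lra).
  assert (hpq : Rpower s a = p * q) by (rewrite hs'; apply eq_sym, Rpower_mult_distr; lra).
  assert (hab : Rpower a0 a * Rpower b0 (1 - a) = b0 * q * Rpower (a0 / (b0 * w)) a).
  { unfold q, Rpower; rewrite ln_div, ln_mult by (first [assumption | apply Rmult_lt_0_compat; assumption]).
    rewrite <- (exp_ln b0) at 2 by assumption; rewrite <- !exp_plus; f_equal; ring. }
  unfold DeltaA; destruct (Req_EM_T a 0); [lra|]; destruct (Req_EM_T a 1); [lra|].
  unfold vertex_profile; rewrite !u_upow by auto; fold p a0 b0; rewrite hab.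
  unfold upow; fold w q; rewrite hpq; unfold a0, b0; rewrite hs'.
  assert (p <> rho) by (intro e; unfold b0 in *; rewrite e in *; unfold Rdiv in *; lra).
  field; repeat split; lra.
Qed.

Lemma vertex_profile_max_generic :
  max_attained_in (vertex_profile a rho) 1 rho (DeltaA a rho).
Proof.
  pose proof a0_pos as ha; pose proof b0_pos as hb.
  split.
  - intros s hs; pose proof (DeltaA_sub_vertex_profile s hs) as gap.
    assert (hw : 0 < s / rho) by (apply Rdiv_lt_0_compat; lra).
    assert (0 < Rpower (s / rho) a) by apply exp_pos.
    pose proof (upow_nonneg a (a0 / (b0 * (s / rho)))
                  (Rdiv_lt_0_compat _ _ ha (Rmult_lt_0_compat _ _ hb hw))).
    assert (0 <= b0 * Rpower (s / rho) a * upow a (a0 / (b0 * (s / rho))) / (rho - 1)).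
    { apply Rdiv_le_0_compat; [|lra]; apply Rmult_le_pos; [nra | auto]. }
    lra.
  - pose proof b0_sub_a0; pose proof rho_a0_sub_b0.
    pose proof (upow_nonneg a rho ltac:(lra)); pose proof (upow_nonneg (1 - a) rho ltac:(lra)).
    assert (0 < p) by apply exp_pos.
    exists (rho * a0 / b0); split.
    + split; apply Rmult_le_reg_r with b0; auto;
        replace (rho * a0 / b0 * b0) with (rho * a0) by (field; lra); nra.
    + pose proof (DeltaA_sub_vertex_profile (rho * a0 / b0)
                    ltac:(apply Rdiv_lt_0_compat; nra)) as gap.
      replace (a0 / (b0 * (rho * a0 / b0 / rho))) with 1 in gap by (field; repeat split; lra).
      replace (upow a 1) with 0 in gap
        by (unfold upow, Rpower; rewrite ln_1, Rmult_0_r, exp_0; field; lra).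
      rewrite Rmult_0_r in gap; unfold Rdiv in gap; rewrite Rmult_0_l in gap; lra.
Qed.

End GenericExponent.

Lemma vertex_profile_max (a rho : R) : 1 < rho ->
  max_attained_in (vertex_profile a rho) 1 rho (DeltaA a rho).
Proof.
  intros hrho; destruct (Req_EM_T a 0) as [->|h0]; [now apply vertex_profile_max_0|].
  destruct (Req_EM_T a 1) as [->|h1]; [now apply vertex_profile_max_1|].
  now apply vertex_profile_max_generic.
Qed.

Lemma vertex_profile_continuous (a rho s : R) : 1 < rho -> 0 < s ->
  continuity_pt (vertex_profile a rho) s.
Proof.
  intros hrho hs; apply derivable_continuous_pt, ex_derive_Reals_0.
  unfold vertex_profile, u, Rpower.
  destruct (Req_EM_T a 0); [|destruct (Req_EM_T a 1)]; auto_derive;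
    repeat split; try apply Rmult_lt_0_compat; try apply Rinv_0_lt_compat; try lra;
    apply Rmult_integral_contrapositive; split; lra.
Qed.

Lemma continuity_pt_eps (f : R -> R) (x e : R) : continuity_pt f x -> 0 < e ->
  exists d, 0 < d /\ forall y, Rabs (y - x) < d -> Rabs (f y - f x) < e.
Proof.
  intros hf he; destruct (hf e he) as [d [hd hfd]]; exists d; split; auto.
  intros y hy; destruct (Req_dec y x) as [->|ne].
  - rewrite Rminus_diag, Rabs_R0; auto.
  - apply hfd; repeat split; auto.
Qed.

Lemma nat_near (n : nat) (x : R) : 0 <= x <= INR n ->
  exists k, (k <= n)%nat /\ Rabs (INR k - x) <= 1.
Proof.
  induction n as [|n IH]; intros hx.
  - exists 0%nat; split; auto; simpl in *; rewrite Rabs_left1; lra.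
  - destruct (Rle_dec x (INR n)).
    + destruct IH as [k [hk h]]; [lra|]; exists k; split; auto.
    + exists (S n); rewrite S_INR in *; split; auto; rewrite Rabs_right; lra.
Qed.

Lemma vertex_grid_near (rho s0 : R) (n : nat) : 1 < rho -> 1 <= s0 <= rho -> (1 <= n)%nat ->
  exists k, (k <= n)%nat /\ Rabs (1 + (rho - 1) * INR k / INR n - s0) <= (rho - 1) / INR n.
Proof.
  intros hrho hs0 hn; apply le_INR in hn; simpl in hn.
  set (lam := (s0 - 1) / (rho - 1)).
  assert (hlam : 0 <= lam <= 1).
  { unfold lam; split; [apply Rdiv_le_0_compat; lra|].
    apply Rmult_le_reg_r with (rho - 1); [lra|].
    replace ((s0 - 1) / (rho - 1) * (rho - 1)) with (s0 - 1) by (field; lra); lra. }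
  destruct (nat_near n (INR n * lam) ltac:(split; nra)) as [k [hk hnear]].
  exists k; split; auto.
  replace (1 + (rho - 1) * INR k / INR n - s0) with ((rho - 1) / INR n * (INR k - INR n * lam))
    by (unfold lam; field; lra).
  rewrite Rabs_mult, Rabs_right by (left; apply Rdiv_lt_0_compat; lra).
  replace ((rho - 1) / INR n) with ((rho - 1) / INR n * 1) at 2 by ring.
  apply Rmult_le_compat_l; auto; left; apply Rdiv_lt_0_compat; lra.
Qed.

Lemma max_vertex_div_cv (a rho : R) : 1 < rho ->
  Un_cv (fun n => max_vertex_div a rho n n) (DeltaA a rho).
Proof.
  intros hrho eps heps.
  destruct (vertex_profile_max a rho hrho) as [hle [s0 [hs0 hmax]]].
  destruct (continuity_pt_eps _ _ _ (vertex_profile_continuous a rho s0 hrho ltac:(lra)) heps)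
    as [d [hd hcont]].
  destruct (INR_archimed d (rho - 1) hd) as [N hN].
  exists (S N); intros n hn; unfold R_dist.
  assert (hn1 : (1 <= n)%nat) by lia.
  assert (hnN : INR N < INR n) by (apply lt_INR; lia).
  destruct (vertex_grid_near rho s0 n hrho hs0 hn1) as [k [hk hnear]].
  assert (hclose : Rabs (1 + (rho - 1) * INR k / INR n - s0) < d).
  { eapply Rle_lt_trans; [exact hnear|].
    apply Rmult_lt_reg_r with (INR n); [pose proof (pos_INR N); lra|].
    replace ((rho - 1) / INR n * INR n) with (rho - 1) by (field; pose proof (pos_INR N); lra).
    nra. }
  pose proof (hcont _ hclose) as hnear_max; rewrite hmax in hnear_max.
  rewrite <- vertex_div_profile in hnear_max by auto.
  pose proof (max_vertex_div_ge a rho n n k hk) as hlow.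
  destruct (max_vertex_div_attained a rho n n) as [k' [hk' e]].
  assert (hup : max_vertex_div a rho n n <= DeltaA a rho).
  { rewrite e, vertex_div_profile by auto; apply hle.
    pose proof (pos_INR k'); apply le_INR in hn1; simpl in hn1.
    assert (0 <= (rho - 1) * INR k' / INR n) by (apply Rdiv_le_0_compat; nra).
    lra. }
  apply Rabs_def2 in hnear_max; apply Rabs_def1; lra.
Qed.

Theorem corollary1 (alpha rho : R) (hrho : 1 < rho) :
  exists M : nat -> R,
    (forall n : nat, (1 <= n)%nat -> is_max_div alpha rho n (M n)) /\
    Un_cv M (DeltaA alpha rho).
Proof.
  exists (fun n => max_vertex_div alpha rho n n); split.
  - intros n hn; apply is_max_div_max_vertex_div; auto.
  - apply max_vertex_div_cv; auto.
Qed.
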